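(* Let $\mu$ be an integer with $h/2<\mu\le h$ and let $l$ be an integer with $2\le l\le n$. Then there exists $p\in\mathcal P$ such that $\Gamma_\mu(p)$ is $l$-cyclic if and only if $\mu\le \frac{l-1}{l}h$.
   Context: Let $n,h\ge2$, $N=\{1,\dots,n\}$, $H=\{1,\dots,h\}$, $\mathcal P$ the set of $h$-tuples of linear orders on $N$; $x>_{p_i}y$ means $x\neq y$ and $p_i$ ranks $x$ above $y$; $x>^p_\mu y$ means $|\{i: x>_{p_i}y\}|\ge\mu$. The $\mu$-majority graph is the directed graph $\Gamma_\mu(p)=(N,\{(x,y): x>^p_\mu y\})$. An $l$-cycle is a directed graph on $l$ distinct vertices $x_1,\dots,x_l$ with arc set exactly $\{(x_j,x_{j+1}):1\le j\le l\}$, $x_{l+1}=x_1$. A directed graph is $l$-cyclic if it has an $l$-cycle as a subgraph (vertex set and arc set contained in those of the graph). *)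

From mathcomp Require Import all_boot.
Set Implicit Arguments. Unset Strict Implicit. Unset Printing Implicit Defensive.

(* N = {1..n} is modelled by 'I_n, H = {1..h} by 'I_h. *)

(* A linear order on 'I_n: reflexive, antisymmetric, transitive, total relation
   (r x y means "x is ranked weakly above y"). *)
Definition linear_order (n : nat) (r : rel 'I_n) : Prop :=
  [/\ reflexive r, antisymmetric r, transitive r & total r].

Definition profile (n h : nat) (p : 'I_h -> rel 'I_n) : Prop :=
  forall i, linear_order (p i).

Definition strict_pref (n h : nat) (p : 'I_h -> rel 'I_n) (i : 'I_h) (x y : 'I_n) : bool :=
  (x != y) && p i x y.

Definition mu_beats (n h : nat) (p : 'I_h -> rel 'I_n) (mu : nat) (x y : 'I_n) : bool :=
  mu <= #|[set i : 'I_h | strict_pref p i x y]|.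

Definition majority_graph (n h : nat) (p : 'I_h -> rel 'I_n) (mu : nat) : rel 'I_n :=
  fun x y => mu_beats p mu x y.

Definition l_cyclic (n : nat) (G : rel 'I_n) (l : nat) : Prop :=
  exists x : 'I_l -> 'I_n, injective x /\ forall j : 'I_l, G (x j) (x (ordS j)).

(* Necessity: a linear order cannot rank every vertex of an l-cycle strictly above
   its successor, so each voter supports at most l - 1 of the l arcs, and double
   counting the pairs (voter, supported arc) gives mu * l <= (l - 1) * h.
   Sufficiency: voter i ranks the cycle 0, 1, ..., l - 1 rotated to start at i mod l.
   Only the voters whose rotation starts at j + 1 oppose the arc j -> j + 1; there
   are at most ceil(h / l) of them, and ceil(h / l) <= h - mu is the bound again. *)

From mathcomp Require Import all_boot zify.
Set Implicit Arguments.
Unset Strict Implicit.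
Unset Printing Implicit Defensive.

Lemma val_iter_ordS l (j : 'I_l) m : val (iter m (@ordS l) j) = (j + m) %% l.
Proof.
elim: m => [|m IH] /=; first by rewrite addn0 modn_small.
by rewrite IH -addn1 modnDml -addnA addn1.
Qed.

Lemma iter_ordS_period l (j : 'I_l) : iter l (@ordS l) j = j.
Proof. by apply: val_inj; rewrite val_iter_ordS modnDr modn_small. Qed.

Lemma order_breaks_cycle (T : Type) (r : rel T) l (x : 'I_l -> T) :
  1 < l -> transitive r -> antisymmetric r -> injective x ->
  exists j, ~~ r (x j) (x (ordS j)).
Proof.
move=> l_gt1 r_trans r_anti x_inj; apply/existsP; rewrite -negb_forall.
apply/negP => /forallP r_up.
have r_reach m j : r (x j) (x (iter m.+1 (@ordS l) j)).
  elim: m j => [|m IH] j; first exact: r_up.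
  by rewrite iterSr; apply: r_trans (IH (ordS j)).
pose z : 'I_l := Ordinal (ltnW l_gt1).
have r_back : r (x (ordS z)) (x z).
  have := r_reach l.-2 (ordS z).
  have -> : l.-2.+1 = l.-1 by lia.
  by rewrite -iterSr prednK ?iter_ordS_period // ltnW.
have /x_inj/(congr1 val) := r_anti _ _ (introT andP (conj (r_up z) r_back)).
by rewrite /= modn_small.
Qed.

Lemma double_counting (I J : finType) (R : I -> J -> bool) :
  \sum_(j : J) #|[set i | R i j]| = \sum_(i : I) #|[set j | R i j]|.
Proof.
under eq_bigr do rewrite -sum1dep_card.
under [RHS]eq_bigr do rewrite -sum1dep_card.
by rewrite (exchange_big_dep predT).
Qed.

Lemma majority_cycle_bound n h mu l (p : 'I_h -> rel 'I_n) :
  1 < l -> profile p -> l_cyclic (majority_graph p mu) l -> mu * l <= (l - 1) * h.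
Proof.
move=> l_gt1 p_lin [x [x_inj x_arcs]].
pose supports i j := strict_pref p i (x j) (x (ordS j)).
have voter_bound i : #|[set j | supports i j]| <= l - 1.
  have [_ p_anti p_trans _] := p_lin i.
  have [j0 j0_out] := order_breaks_cycle l_gt1 p_trans p_anti x_inj.
  have : [set j | supports i j] \proper [set: 'I_l].
    rewrite properT; apply/eqP => /setP/(_ j0); rewrite !inE /supports.
    by rewrite /strict_pref (negbTE j0_out) andbF.
  by move/proper_card; rewrite cardsT card_ord; lia.
rewrite -!iter_addn_0 -!big_const_ord.
apply: (@leq_trans (\sum_(j < l) #|[set i | supports i j]|)).
  by apply: leq_sum => j _; apply: x_arcs.
by rewrite double_counting; apply: leq_sum => i _.
Qed.

(* Position of vertex [v] in the ballot ranking the cycle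
   [k, k+1, ..., l-1, 0, ..., k-1] first and then the remaining vertices [l, l+1, ...] in
   increasing order. *)
Definition cycle_rank (l k v : nat) : nat :=
  if v < l then (if k <= v then v - k else v + l - k) else v.

Lemma cycle_rank_inj l k : k < l -> injective (cycle_rank l k).
Proof.
rewrite /cycle_rank => k_lt a b.
by case: (ltnP a l); case: (ltnP b l); case: (leqP k a); case: (leqP k b); lia.
Qed.

Lemma cycle_rank_succ l k j : k < l -> j < l -> k != j.+1 %% l ->
  cycle_rank l k j < cycle_rank l k (j.+1 %% l).
Proof.
move=> k_lt j_lt /eqP; rewrite /cycle_rank j_lt.
have [j1_lt|j1_ge] := ltnP j.+1 l.
  by rewrite modn_small // j1_lt; case: (leqP k j); case: (leqP k j.+1); lia.
have -> : j.+1 = l by lia.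
rewrite modnn (leq_ltn_trans (leq0n k) k_lt).
by case: (leqP k j); case: (leqP k 0); lia.
Qed.

Definition cyclic_ballot n l k : rel 'I_n :=
  fun a b => cycle_rank l k a <= cycle_rank l k b.

Lemma cyclic_ballot_linear n l k :
  k < l -> linear_order (cyclic_ballot l k : rel 'I_n).
Proof.
move=> k_lt; split=> [a | a b | a b c | a b]; rewrite /cyclic_ballot //.
- by rewrite -eqn_leq => /eqP/(cycle_rank_inj k_lt)/val_inj.
- exact: leq_trans.
- exact: leq_total.
Qed.

Definition cyclic_profile n h l : 'I_h -> rel 'I_n :=
  fun i => cyclic_ballot l (i %% l).

Lemma cyclic_profile_linear n h l :
  0 < l -> profile (cyclic_profile l : 'I_h -> rel 'I_n).
Proof. by move=> l_gt0 i; apply: cyclic_ballot_linear; rewrite ltn_pmod. Qed.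

Lemma cyclic_profile_strict n h l (l_le : l <= n) (i : 'I_h) (j : 'I_l) :
  i %% l != ordS j ->
  strict_pref (cyclic_profile l) i (widen_ord l_le j) (widen_ord l_le (ordS j)).
Proof.
move=> i_ne; have l_gt0 : 0 < l := leq_ltn_trans (leq0n j) (ltn_ord j).
have rank_lt := cycle_rank_succ (ltn_pmod i l_gt0) (ltn_ord j) i_ne.
apply/andP; split; last exact: ltnW.
by apply/eqP => /(congr1 (cycle_rank l (i %% l) \o val)) /= rank_eq;
  rewrite rank_eq ltnn in rank_lt.
Qed.

Lemma card_residue_class h l q s : 0 < l -> h <= l * q ->
  #|[set i : 'I_h | i %% l == s]| <= q.
Proof.
move=> l_gt0; case: q => [|q] h_le.
  by apply: leq_trans (max_card _) _; rewrite card_ord; lia.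
have quot_lt (i : 'I_h) : i %/ l < q.+1.
  by rewrite ltn_divLR //; have := ltn_ord i; lia.
rewrite -[q.+1]card_ord.
apply: (@leq_card_in _ _ (fun i : 'I_h => inord (i %/ l))) => a b.
rewrite !inE => /eqP a_s /eqP b_s /(congr1 val); rewrite /= !inordK // => quot_eq.
by apply: val_inj; rewrite /= (divn_eq a l) (divn_eq b l) quot_eq a_s b_s.
Qed.

Lemma cyclic_profile_cyclic n h l mu : l <= n -> 0 < l -> mu <= h ->
  h <= l * (h - mu) ->
  l_cyclic (majority_graph (cyclic_profile l : 'I_h -> rel 'I_n) mu) l.
Proof.
move=> l_le l_gt0 mu_le h_le; exists (widen_ord l_le); split.
  by move=> a b /(congr1 val) ab; apply: val_inj.
move=> j; rewrite /majority_graph /mu_beats.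
pose dissent := [set i : 'I_h | i %% l == ordS j].
have dissent_small : #|dissent| <= h - mu := card_residue_class _ l_gt0 h_le.
have := cardsC dissent; rewrite card_ord => dissent_compl.
apply: leq_trans (subset_leq_card (_ : ~: dissent \subset _)); first lia.
by apply/subsetP => i; rewrite !inE; apply: cyclic_profile_strict.
Qed.

Theorem proposition7 (n h mu l : nat) :
  2 <= n -> 2 <= h ->
  h < 2 * mu -> mu <= h ->
  2 <= l -> l <= n ->
  ((exists p : 'I_h -> rel 'I_n, profile p /\ l_cyclic (majority_graph p mu) l)
   <-> mu * l <= (l - 1) * h).
Proof.
move=> _ _ _ mu_le l_ge2 l_le; split.
  by case=> p [p_lin p_cyclic]; apply: majority_cycle_bound p_cyclic.
move=> bound; have l_gt0 : 0 < l by lia.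
exists (cyclic_profile l); split; first exact: cyclic_profile_linear.
by apply: cyclic_profile_cyclic => //; nia.
Qed.
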